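(* Fix $\eta>0$ and $u\in\mathbb{R}^d$. Let $C=\{1,\dots,m\}$ be a set of $m\ge1$ rollouts, each with verifier reward $r_i=1$, whose reward-weighted embeddings are all identical: $\tilde z_i=u$ for all $i\in C$. Define the team value on subsets $S\subseteq C$ by $v(\emptyset)=0$ and $v(S)=\log\det(I_{|S|}+\eta L_S)$, where $L_S=(\langle\tilde z_j,\tilde z_k\rangle)_{j,k\in S}$. Let $\phi_i$ denote the Shapley value of player $i$ in the cooperative game $(C,v)$, i.e. $$\phi_i=\sum_{S\subseteq C\setminus\{i\}}\frac{|S|!\,(m-|S|-1)!}{m!}\left[v(S\cup\{i\})-v(S)\right].$$ Then for every $i\in C$, $$\phi_i=\frac{1}{m}\log\left(1+\eta m\|u\|_2^2\right).$$
   Context: In the paper, $\tilde z_i=r_i\bar z_i$ where $r_i$ is the binary verifier reward and $\bar z_i$ the unit-normalized semantic embedding of a sampled response; ''verifier-correct'' means $r_i=1$. *)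

From mathcomp Require Import all_boot all_order all_algebra.
From mathcomp Require Import all_classical all_reals all_analysis.
Set Implicit Arguments. Unset Strict Implicit. Unset Printing Implicit Defensive.
Import Order.TTheory GRing.Theory Num.Theory.
Local Open Scope ring_scope.

Definition dotv (R : realType) (d : nat) (x y : 'rV[R]_d) : R :=
  \sum_(k < d) x ord0 k * y ord0 k.

Definition sqnorm (R : realType) (d : nat) (x : 'rV[R]_d) : R := dotv x x.

Definition gramS (R : realType) (d m : nat) (z : 'I_m -> 'rV[R]_d)
  (S : {set 'I_m}) : 'M[R]_#|S| :=
  \matrix_(j < #|S|, k < #|S|) dotv (z (enum_val j)) (z (enum_val k)).

Definition team_value (R : realType) (d m : nat) (eta : R)
  (z : 'I_m -> 'rV[R]_d) (S : {set 'I_m}) : R :=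
  if (#|S| == 0)%N then 0
  else ln (\det (1%:M + eta *: gramS z S)).

Definition shapley (R : realType) (m : nat) (v : {set 'I_m} -> R) (i : 'I_m) : R :=
  \sum_(S : {set 'I_m} | i \notin S)
    ((#|S|)`!%:R * ((m - #|S| - 1)`!)%:R / (m`!)%:R) * (v (finset.setU [set i] S) - v S).

(** The team value depends only on the size of the coalition: with identical
    embeddings L_S is the constant matrix |u|^2 J, and the Weinstein-Aronszajn
    identity det (I + A B) = det (I + B A) collapses det (I + eta |u|^2 J) to
    the 1 x 1 determinant 1 + eta |u|^2 |S|.  In a game whose value depends
    only on coalition size, grouping the Shapley sum by |S| turns the weights
    |S|! (m - |S| - 1)! / m! times the binomial counts into 1/m, and the
    marginal contributions telescope to v(C) - v(emptyset). *)

From mathcomp Require Import all_boot all_order all_algebra.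
From mathcomp Require Import all_classical all_reals all_analysis.
Import Order.TTheory GRing.Theory Num.Theory.
Local Open Scope ring_scope.

Lemma det_1_addmulC (R : comPzRingType) (m n : nat)
    (A : 'M[R]_(m, n)) (B : 'M[R]_(n, m)) :
  \det (1%:M + A *m B) = \det (1%:M + B *m A).
Proof.
(* Two block LU factorizations of [[1, -B], [A, 1]]. *)
have LU : block_mx 1%:M (- B) A 1%:M
    = block_mx 1%:M 0 A 1%:M *m block_mx 1%:M (- B) 0 (1%:M + A *m B).
  rewrite mulmx_block !mul1mx !mul0mx ?mulmx0 ?addr0 ?add0r mulmxN mulmx1.
  by rewrite [- _ + _]addrC addrK.
have UL : block_mx 1%:M (- B) A 1%:M
    = block_mx (1%:M + B *m A) (- B) 0 1%:M *m block_mx 1%:M 0 A 1%:M.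
  rewrite mulmx_block !mul1mx !mul0mx ?mulmx0 ?addr0 ?add0r mulNmx !mulmx1.
  by rewrite addrK.
have := congr1 determinant UL.
by rewrite {1}LU !det_mulmx det_lblock !det_ublock !det1 !mul1r !mulr1.
Qed.

Lemma det_1_add_const_mx (R : comPzRingType) (n : nat) (a : R) :
  \det (1%:M + (const_mx a : 'M[R]_n)) = 1 + a * n%:R.
Proof.
have -> : const_mx a = (const_mx a : 'M[R]_(n, 1)) *m (const_mx 1 : 'M[R]_(1, n)).
  by apply/matrixP => j k; rewrite !mxE big_ord1 !mxE mulr1.
rewrite det_1_addmulC det_mx11 !mxE mulr1n; congr (_ + _).
under eq_bigr do rewrite !mxE mul1r.
by rewrite sumr_const card_ord mulr_natr.
Qed.

Lemma team_value_const (R : realType) (d m : nat) (eta : R)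
    (u : 'rV[R]_d) (S : {set 'I_m}) :
  team_value eta (fun _ => u) S = ln (1 + eta * sqnorm u * #|S|%:R).
Proof.
rewrite /team_value; case: eqP => [->|_]; first by rewrite mulr0 addr0 ln1.
have -> : eta *: gramS (fun _ => u) S = const_mx (eta * sqnorm u).
  by apply/matrixP => j k; rewrite !mxE.
by rewrite det_1_add_const_mx.
Qed.

Lemma sum_setC1_card (V : nmodType) (n : nat) (i : 'I_n.+1) (F : nat -> V) :
  \sum_(S : {set 'I_n.+1} | i \notin S) F #|S|
    = \sum_(j < n.+1) F j *+ 'C(n, j).
Proof.
have avoid_i (S : {set 'I_n.+1}) : (i \notin S) = (S \subset [set~ i]).
  by rewrite finset.subsetC finset.sub1set inE.
have card_lt (S : {set 'I_n.+1}) : i \notin S -> (#|S| < n.+1)%N.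
  by rewrite avoid_i => /subset_leq_card; rewrite cardsC1 card_ord.
rewrite (partition_big (fun S : {set 'I_n.+1} => inord #|S| : 'I_n.+1) predT) //=.
apply: eq_bigr => j _.
have -> : 'C(n, j) = #|[set S : {set 'I_n.+1} | S \subset [set~ i] & #|S| == j]|.
  by rewrite cards_draws cardsC1 card_ord.
rewrite -sumr_const.
apply: eq_big => [S | S /andP[iS /eqP <-]]; last by rewrite inordK ?card_lt.
rewrite !inE -avoid_i; case iS: (i \notin S) => //=.
by rewrite -(inj_eq val_inj) /= inordK ?card_lt ?iS.
Qed.

Lemma shapley_weight_binomial (R : numFieldType) (n j : nat) : (j <= n)%N ->
  (j`!)%:R * ((n.+1 - j - 1)`!)%:R / (n.+1`!)%:R *+ 'C(n, j) = n.+1%:R^-1 :> R.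
Proof.
move=> le_jn; rewrite subn1 subSn //= -mulr_natr mulrAC -!natrM mulnC bin_fact //.
by rewrite factS natrM invfM mulrCA mulfV ?mulr1 // pnatr_eq0 -lt0n fact_gt0.
Qed.

Lemma shapley_card_game (R : realType) (n : nat) (f : nat -> R) (i : 'I_n.+1) :
  shapley (fun S => f #|S|) i = n.+1%:R^-1 * (f n.+1 - f 0%N).
Proof.
pose w k : R := (k`!)%:R * ((n.+1 - k - 1)`!)%:R / (n.+1`!)%:R.
rewrite /shapley.
under eq_bigr => S iS do rewrite cardsU1 iS add1n.
rewrite (@sum_setC1_card _ n i (fun k => w k * (f k.+1 - f k))).
under eq_bigr => j _.
  rewrite -mulrnAl /w shapley_weight_binomial; last by rewrite -ltnS.
  over.
rewrite -mulr_sumr -(big_mkord xpredT (fun j => f j.+1 - f j)).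
by rewrite telescope_sumr.
Qed.

Theorem theorem2 (R : realType) (d m : nat) (eta : R) (u : 'rV[R]_d)
  (r : 'I_m -> R) (zbar : 'I_m -> 'rV[R]_d) :
  0 < eta -> (0 < m)%N ->
  (forall i, r i = 1) ->
  (forall i, r i *: zbar i = u) ->
  forall i : 'I_m,
    shapley (team_value eta (fun j => r j *: zbar j)) i
    = m%:R^-1 * ln (1 + eta * m%:R * sqnorm u).
Proof.
case: m r zbar => [|n] r zbar _ // _ _ rz i.
have -> : (fun j => r j *: zbar j) = (fun _ => u) by apply/funext.
pose f k : R := ln (1 + eta * sqnorm u * k%:R).
have -> : team_value eta (fun _ => u) = (fun S : {set 'I_n.+1} => f #|S|).
  by apply/funext => S; exact: team_value_const.
by rewrite shapley_card_game /f mulr0 addr0 ln1 subr0 mulrAC.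
Qed.
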